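(* Let $\Lambda$ be a left-artinian ring, $\mathcal{C}=\mathrm{mod}(\Lambda)$, let $\beta$ be a radical and $\alpha$ a pre-radical on $\mathcal{C}$. If $\mathcal{F}_\alpha\subseteq\mathcal{T}_\beta$, then for every $M\in\mathcal{C}$ we have $\mathrm{soc}(q_\beta(M))\in\mathcal{T}_\alpha\cap\mathcal{F}_\beta$.
   Context: $\mathcal{C}$ is the category of finitely generated left $\Lambda$-modules. A pre-radical is an additive subfunctor $\alpha$ of the identity functor; for it, $q_\alpha:=\mathrm{Id}/\alpha$, so $q_\alpha(M)=M/\alpha(M)$. A radical is a pre-radical $\beta$ with $\beta\circ q_\beta=0$. $\mathcal{F}_\alpha=\{M:\alpha(M)=0\}$, $\mathcal{T}_\alpha=\{M:\alpha(M)=M\}$. *)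

From HB Require Import structures.
From mathcomp Require Import all_boot all_order all_algebra.
Set Implicit Arguments. Unset Strict Implicit. Unset Printing Implicit Defensive.
Import GRing.Theory.
Local Open Scope ring_scope.

(* Modules over Lambda are MathComp left modules [lmodType R].
   Subsets (submodules, values of pre-radicals) are Prop-valued predicates. *)

Section ModDefs.
Variable R : nzRingType.

Definition left_ideal (I : R -> Prop) : Prop :=
  I 0 /\ (forall x y, I x -> I y -> I (x - y)) /\ (forall r x, I x -> I (r * x)).

Definition left_artinian : Prop :=
  forall I : nat -> R -> Prop,
    (forall n, left_ideal (I n)) ->
    (forall n x, I n.+1 x -> I n x) ->
    exists n, forall m, (n <= m)%N -> forall x, I m x <-> I n x.

Definition submodule (M : lmodType R) (S : M -> Prop) : Prop :=
  S 0 /\ (forall x y, S x -> S y -> S (x + y)) /\ (forall (a : R) x, S x -> S (a *: x)).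

Definition fin_gen (M : lmodType R) : Prop :=
  exists s : seq M, forall x : M,
    exists c : 'I_(size s) -> R, x = \sum_(i < size s) c i *: s`_i.

(* A pre-radical on C = mod(R): an assignment M |-> alpha(M) of a submodule
   to every finitely generated module, such that every morphism f : M -> N
   in C maps alpha(M) into alpha(N) (subfunctor of the identity; additivity
   is automatic for subfunctors of Id). Values on non-f.g. modules are
   irrelevant. *)
Definition preradical (alpha : forall M : lmodType R, M -> Prop) : Prop :=
  (forall M : lmodType R, fin_gen M -> submodule (alpha M)) /\
  (forall (M N : lmodType R) (f : {linear M -> N}),
      fin_gen M -> fin_gen N -> forall x, alpha M x -> alpha N (f x)).

Definition is_quotient_by (M Q : lmodType R) (S : M -> Prop) (p : {linear M -> Q}) : Prop :=
  (forall y : Q, exists x : M, p x = y) /\ (forall x : M, p x = 0 <-> S x).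

(* i : S -> Q presents S as (isomorphic to) the submodule N of Q *)
Definition is_submodule_iso (S Q : lmodType R) (N : Q -> Prop) (i : {linear S -> Q}) : Prop :=
  injective i /\ (forall y : Q, N y <-> exists x : S, i x = y).

Definition radical (beta : forall M : lmodType R, M -> Prop) : Prop :=
  preradical beta /\
  forall (M Q : lmodType R) (p : {linear M -> Q}),
    fin_gen M -> is_quotient_by (beta M) p -> forall y : Q, beta Q y -> y = 0.

Definition in_F (alpha : forall M : lmodType R, M -> Prop) (M : lmodType R) : Prop :=
  fin_gen M /\ forall x : M, alpha M x -> x = 0.
Definition in_T (alpha : forall M : lmodType R, M -> Prop) (M : lmodType R) : Prop :=
  fin_gen M /\ forall x : M, alpha M x.

Definition simple_submodule (M : lmodType R) (S : M -> Prop) : Prop :=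
  submodule S /\ (exists x, S x /\ x <> 0) /\
  forall T : M -> Prop, submodule T -> (forall x, T x -> S x) ->
    (forall x, T x -> x = 0) \/ (forall x, S x -> T x).

Definition socle (M : lmodType R) (x : M) : Prop :=
  exists s : seq M,
    (forall y, y \in s -> exists S, simple_submodule S /\ S y) /\
    x = \sum_(y <- s) y.

End ModDefs.

(* Over a left-artinian ring every finitely generated module has DCC on submodules
   (induction on the number of generators u, reducing modulo R u to DCC on the left ideals
   {r | r u \in N_k}).  Hence the socle of Q = M / beta(M) is spanned by finitely many
   simple elements: otherwise a sequence of simple elements, each outside the span of its
   predecessors, would make the spans of its tails a descending chain that never
   stabilises.  So S ~ soc(Q) is finitely generated, and beta(S) embeds into beta(Q) = 0.
   For a simple T <= soc(Q) with preimage U <= S (again simple), alpha(U) = 0 would give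
   U in F_alpha <= T_beta and then T <= beta(Q) = 0; so alpha(U) = U, whence every simple
   constituent of soc(Q), and therefore all of S, lies in alpha(S). *)

From HB Require Import structures.
From mathcomp Require Import all_boot all_algebra.
From mathcomp Require Import boolp.
From Stdlib Require Import ClassicalEpsilon.
Set Implicit Arguments. Unset Strict Implicit. Unset Printing Implicit Defensive.
Import GRing.Theory.
Local Open Scope ring_scope.

Section Closure.
Variables (R : nzRingType) (V : lmodType R) (P : V -> Prop) (hP : submodule P).
Implicit Types (x y : V).

Lemma submodule0 : P 0. Proof. by case: hP. Qed.

Lemma submoduleD x y : P x -> P y -> P (x + y).
Proof. by case: hP => _ [hD _]; apply: hD. Qed.

Lemma submoduleZ (a : R) x : P x -> P (a *: x).
Proof. by case: hP => _ [_ hZ]; apply: hZ. Qed.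

Lemma submoduleN x : P x -> P (- x).
Proof. by rewrite -scaleN1r; apply: submoduleZ. Qed.

Lemma submoduleB x y : P x -> P y -> P (x - y).
Proof. by move=> Px Py; apply: submoduleD => //; apply: submoduleN. Qed.

Lemma submodule_sum (I : eqType) (r : seq I) (F : I -> V) :
  (forall i, i \in r -> P (F i)) -> P (\sum_(i <- r) F i).
Proof.
elim: r => [|i r IHr] PF; first by rewrite big_nil; apply: submodule0.
rewrite big_cons; apply: submoduleD; first by apply: PF; rewrite mem_head.
by apply: IHr => j rj; apply: PF; rewrite inE rj orbT.
Qed.

End Closure.

Section Constructions.
Variables (R : nzRingType) (V : lmodType R).
Implicit Types (A B : V -> Prop) (x z : V).

Lemma submoduleI A B : submodule A -> submodule B -> submodule (fun x => A x /\ B x).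
Proof.
move=> hA hB; split; first by split; apply: submodule0.
split=> [x y [Ax Bx] [Ay By]|a x [Ax Bx]]; split.
- exact: submoduleD.
- exact: submoduleD.
- exact: submoduleZ.
- exact: submoduleZ.
Qed.

Definition sum_submod A B x : Prop := exists a b, A a /\ B b /\ x = a + b.

Definition cyclic_submod z x : Prop := exists r : R, x = r *: z.

Lemma submodule_sum_submod A B : submodule A -> submodule B -> submodule (sum_submod A B).
Proof.
move=> hA hB; split.
  by exists 0, 0; rewrite addr0; split; [exact: submodule0|split; [exact: submodule0|]].
split=> [x y [a [b [Aa [Bb ->]]]] [a' [b' [Aa' [Bb' ->]]]]|c x [a [b [Aa [Bb ->]]]]].
  exists (a + a'), (b + b'); rewrite addrACA; split; first exact: submoduleD.
  by split; first exact: submoduleD.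
exists (c *: a), (c *: b); rewrite scalerDr; split; first exact: submoduleZ.
by split; first exact: submoduleZ.
Qed.

Lemma submodule_cyclic z : submodule (cyclic_submod z).
Proof.
split; first by exists 0; rewrite scale0r.
split=> [_ _ [r ->] [s ->]|a _ [r ->]]; first by exists (r + s); rewrite scalerDl.
by exists (a * r); rewrite scalerA.
Qed.

Lemma submodule_image (W : lmodType R) (f : {linear W -> V}) (P : W -> Prop) :
  submodule P -> submodule (fun v => exists w, P w /\ f w = v).
Proof.
move=> hP; split; first by exists 0; rewrite linear0; split; first exact: submodule0.
split=> [_ _ [w [Pw <-]] [w' [Pw' <-]]|a _ [w [Pw <-]]].
  by exists (w + w'); rewrite linearD; split; first exact: submoduleD.
by exists (a *: w); rewrite linearZ; split; first exact: submoduleZ.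
Qed.

Lemma submodule_preimage (W : lmodType R) (f : {linear W -> V}) (P : V -> Prop) :
  submodule P -> submodule (fun w => P (f w)).
Proof.
move=> hP; split; first by rewrite linear0; apply: submodule0.
split=> [w w' Pw Pw'|a w Pw]; first by rewrite linearD; apply: submoduleD.
by rewrite linearZ; apply: submoduleZ.
Qed.

End Constructions.

(* A submodule given by a [Prop] predicate, bundled with its closure proof so that it
   can carry the [lmodType] structure of a subtype. *)
Record submod (R : nzRingType) (V : lmodType R) :=
  Submod { submod_set : V -> Prop; submod_setP : submodule submod_set }.

Definition submod_pred (R : nzRingType) (V : lmodType R) (U : submod V) : pred V :=
  fun x => `[< submod_set U x >].

Lemma submod_pred_closed (R : nzRingType) (V : lmodType R) (U : submod V) :
  GRing.submod_closed (submod_pred U).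
Proof.
have hU := submod_setP U.
split; first by rewrite unfold_in; apply/asboolP; exact: submodule0 hU.
move=> a x y; rewrite !unfold_in => /asboolP Ux /asboolP Uy; apply/asboolP.
by apply: submoduleD => //; apply: submoduleZ.
Qed.

HB.instance Definition _ (R : nzRingType) (V : lmodType R) (U : submod V) :=
  GRing.isSubmodClosed.Build R V (submod_pred U)
    (GRing.submod_closed_semi (submod_pred_closed U)).

Inductive submod_type (R : nzRingType) (V : lmodType R) (U : submod V) : predArgType :=
  SubmodElem u & u \in submod_pred U.

Definition submod_val (R : nzRingType) (V : lmodType R) (U : submod V) (w : submod_type U) : V :=
  let: SubmodElem u _ := w in u.

HB.instance Definition _ (R : nzRingType) (V : lmodType R) (U : submod V) :=
  [isSub of submod_type U for @submod_val R V U].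
HB.instance Definition _ (R : nzRingType) (V : lmodType R) (U : submod V) :=
  [Choice of submod_type U by <:].
HB.instance Definition _ (R : nzRingType) (V : lmodType R) (U : submod V) :=
  [SubChoice_isSubZmodule of submod_type U by <:].
HB.instance Definition _ (R : nzRingType) (V : lmodType R) (U : submod V) :=
  [SubZmodule_isSubLmodule of submod_type U by <:].

Fact submod_val_is_linear (R : nzRingType) (V : lmodType R) (U : submod V) :
  linear (@submod_val R V U).
Proof. by []. Qed.

HB.instance Definition _ (R : nzRingType) (V : lmodType R) (U : submod V) :=
  GRing.isSemilinear.Build R (submod_type U) V _ (@submod_val R V U)
    (GRing.semilinear_linear (@submod_val_is_linear R V U)).

Lemma submod_valP (R : nzRingType) (V : lmodType R) (U : submod V) (w : submod_type U) :
  submod_set U (submod_val w).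
Proof. by case: w => u /=; rewrite unfold_in => /asboolP. Qed.

Definition spanned (R : nzRingType) (V : lmodType R) (s : seq V) (x : V) : Prop :=
  exists c : 'I_(size s) -> R, x = \sum_(i < size s) c i *: s`_i.

Lemma fin_gen_image (R : nzRingType) (M N : lmodType R) (f : {linear M -> N}) :
  (forall y, exists x, f x = y) -> fin_gen M -> fin_gen N.
Proof.
move=> f_onto [s hs]; exists (map f s); rewrite size_map => y.
have [x <-] := f_onto y; have [c ->] := hs x; exists c.
by rewrite linear_sum; apply: eq_bigr => i _; rewrite linearZ (nth_map 0).
Qed.

Lemma fin_gen_cyclic (R : nzRingType) (V : lmodType R) (z : V) :
  (forall x, cyclic_submod z x) -> fin_gen V.
Proof.
by move=> hz; exists [:: z] => x; have [r ->] := hz x; exists (fun=> r); rewrite big_ord1.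
Qed.

Lemma map_preimage (A : Type) (B : eqType) (f : A -> B) (s : seq B) :
  (forall y, y \in s -> exists x, f x = y) -> exists s', map f s' = s.
Proof.
elim: s => [|y s IHs] hs; first by exists [::].
have [x fx] := hs y (mem_head y s).
have [|s' <-] := IHs; first by move=> z zs; apply: hs; rewrite inE zs orbT.
by exists (x :: s'); rewrite /= fx.
Qed.

Lemma fin_gen_preimage (R : nzRingType) (S Q : lmodType R) (i : {linear S -> Q}) (s : seq Q) :
  injective i -> (forall y, y \in s -> exists x, i x = y) ->
  (forall x, spanned s (i x)) -> fin_gen S.
Proof.
move=> inj_i /map_preimage [s' <-] hs; exists s' => x.
move: (hs x); rewrite /spanned size_map => -[c hc]; exists c.
by apply: inj_i; rewrite hc linear_sum; apply: eq_bigr => j _; rewrite linearZ (nth_map 0).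
Qed.

Definition descending (T : Type) (N : nat -> T -> Prop) : Prop :=
  forall k x, N k.+1 x -> N k x.

Definition stationary (T : Type) (N : nat -> T -> Prop) : Prop :=
  exists n, forall m, (n <= m)%N -> forall x, N m x <-> N n x.

Lemma descending_le (T : Type) (N : nat -> T -> Prop) :
  descending N -> forall m n, (m <= n)%N -> forall x, N n x -> N m x.
Proof.
move=> decN m n; elim: n => [|n IHn]; first by rewrite leqn0 => /eqP ->.
by rewrite leq_eqVlt => /orP [/eqP -> //|le_mn] x /decN; apply: IHn.
Qed.

Section ArtinianDCC.
Variables (R : nzRingType) (V : lmodType R).
Hypothesis art : left_artinian R.

Lemma stationary_mod_cyclic (W : V -> Prop) (v : V) (N : nat -> V -> Prop) :
  submodule W -> (forall k, submodule (N k)) -> descending N -> (forall k x, W x -> N k x) ->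
  stationary (fun k => sum_submod (N k) (sum_submod W (cyclic_submod v))) ->
  stationary (fun k (r : R) => N k (r *: v)) -> stationary N.
Proof.
move=> hW hN decN WN [n1 st1] [n2 st2].
have le1 := leq_maxl n1 n2; have le2 := leq_maxr n1 n2.
exists (maxn n1 n2) => m le_m x; split; first exact: descending_le.
move=> Nx; have [y [_ [Ny [[w [_ [Ww [[r ->] ->]]]] x_eq]]]] :
    sum_submod (N m) (sum_submod W (cyclic_submod v)) x.
  apply/(st1 m (leq_trans le1 le_m)); exists x, 0; rewrite addr0.
  split; first exact: descending_le Nx.
  by split; first exact: submodule0 (submodule_sum_submod hW (submodule_cyclic v)).
have Nrv : N n2 (r *: v).
  have -> : r *: v = x - y - w by rewrite x_eq [y + _]addrC addrK addrC addKr.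
  apply: submoduleB => //; last exact: WN.
  apply: submoduleB => //; first exact: descending_le Nx.
  exact: descending_le (leq_trans le2 le_m) _ Ny.
have := (st2 m (leq_trans le2 le_m) r).2 Nrv => Nrv_m.
by rewrite x_eq; apply: submoduleD => //; apply: submoduleD => //; apply: WN.
Qed.

(* DCC relative to a submodule [W] lying in every [N k]: the relative form is what lets
   the induction on the number of generators [u i] go through. *)
Lemma stationary_rel (u : nat -> V) n (W : V -> Prop) (N : nat -> V -> Prop) :
  submodule W -> (forall x, exists w (c : 'I_n -> R), W w /\ x = w + \sum_(i < n) c i *: u i) ->
  (forall k, submodule (N k)) -> descending N -> (forall k x, W x -> N k x) -> stationary N.
Proof.
elim: n W N => [|n IHn] W N hW genW hN decN WN.
  exists 0%N => m _ x; split; first exact: descending_le.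
  by have [w [c [Ww ->]]] := genW x; rewrite big_ord0 addr0 => _; apply: WN.
pose W' := sum_submod W (cyclic_submod (u n)).
have hW' : submodule W' := submodule_sum_submod hW (submodule_cyclic (u n)).
apply: (stationary_mod_cyclic (W := W)) => //.
  apply: (IHn W' _ hW') => [x|k|k x [y [w [Ny [W'w ->]]]]|k x W'x].
  - have [w [c [Ww ->]]] := genW x.
    exists (w + c ord_max *: u n), (fun i => c (widen_ord (leqnSn n) i)); split.
      by exists w, (c ord_max *: u n); split => //; split => //; exists (c ord_max).
    by rewrite big_ord_recr addrA addrAC.
  - exact: submodule_sum_submod (hN k) hW'.
  - by exists y, w; split => //; apply: decN.
  - by exists 0, x; rewrite add0r; split => //; apply: submodule0.
apply: art => [k|k r]; last exact: decN.
split; first by rewrite scale0r; apply: submodule0.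
split=> [r r' Nr Nr'|a r Nr]; first by rewrite scalerBl; apply: submoduleB.
by rewrite -scalerA; apply: submoduleZ.
Qed.

Lemma fin_gen_stationary (N : nat -> V -> Prop) :
  fin_gen V -> (forall k, submodule (N k)) -> descending N -> stationary N.
Proof.
move=> [s hs] hN decN.
apply: (@stationary_rel (nth 0 s) (size s) (fun x => x = 0)) => //.
- by split => //; split=> [x y -> ->|a x ->]; rewrite ?addr0 ?scaler0.
- by move=> x; have [c ->] := hs x; exists 0, c; rewrite add0r.
- by move=> k x ->; apply: submodule0.
Qed.

End ArtinianDCC.

Lemma nat_dependent_choice (T : Type) (x0 : T) (P : (nat -> T) -> nat -> T -> Prop) :
  (forall t t' n y, (forall j, (j < n)%N -> t j = t' j) -> P t n y -> P t' n y) ->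
  (forall n t, (forall j, (j < n)%N -> P t j (t j)) -> exists y, P t n y) ->
  exists t, forall n, P t n (t n).
Proof.
move=> P_local P_ext.
pose next t n := epsilon (inhabits x0) (P t n).
pose fix prefix n := if n is k.+1 then fun j => if j == k then next (prefix k) k else prefix k j
                     else fun=> x0.
pose t j := prefix j.+1 j.
have prefixE m j : (j < m)%N -> prefix m j = t j.
  elim: m => [//|m IHm]; rewrite ltnS leq_eqVlt => /orP [/eqP ->//|lt_jm] /=.
  by rewrite (ltn_eqF lt_jm) IHm.
suff Pt n j : (j < n)%N -> P t j (t j) by exists t => n; apply: (Pt n.+1).
elim: n j => [//|n IHn] j; rewrite ltnS leq_eqVlt => /orP [/eqP ->|]; last exact: IHn.
apply: (P_local (prefix n)) => [i lt_in|]; first by rewrite prefixE.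
rewrite /t /= eqxx; apply: epsilon_spec; apply: P_ext => i lt_in.
rewrite prefixE //; apply: (P_local t) (IHn i lt_in) => k lt_ki.
by rewrite prefixE // (ltn_trans lt_ki).
Qed.

Section Socle.
Variables (R : nzRingType) (V : lmodType R).
Implicit Types (A T : V -> Prop) (t : nat -> V) (x y z : V).

Definition in_simple y : Prop := exists T, simple_submodule T /\ T y.

Lemma socle_in_simple y : in_simple y -> socle y.
Proof. by move=> y_simple; exists [:: y]; rewrite big_seq1; split=> // z /[!inE] /eqP ->. Qed.

Lemma socle_sub A : submodule A -> (forall y, in_simple y -> A y) -> forall x, socle x -> A x.
Proof.
move=> hA simple_A x [s [s_simple ->]].
by apply: submodule_sum => // y /s_simple /simple_A.
Qed.

Lemma simple_meet0 T A y : simple_submodule T -> submodule A -> T y -> ~ A y ->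
  forall x, T x -> A x -> x = 0.
Proof.
move=> [hT [_ T_min]] hA Ty nAy x Tx Ax.
have [TA0|] := T_min _ (submoduleI hT hA) (fun _ => proj1 (B:=_)); first exact: TA0.
by move=> /(_ y Ty) [].
Qed.

Lemma simple_cyclic T z :
  simple_submodule T -> T z -> z <> 0 -> forall x, T x -> cyclic_submod z x.
Proof.
move=> [hT [_ T_min]] Tz nz0.
have Rz_sub x : cyclic_submod z x -> T x by move=> [r ->]; apply: submoduleZ.
have [Rz0|//] := T_min _ (submodule_cyclic z) Rz_sub.
by case: nz0; apply: Rz0; exists 1; rewrite scale1r.
Qed.

Definition span t m n x : Prop := exists c : nat -> R, x = \sum_(m <= j < n) c j *: t j.

Lemma submodule_span t m n : submodule (span t m n).
Proof.
split; first by exists (fun=> 0); rewrite big1 // => j _; rewrite scale0r.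
split=> [_ _ [c ->] [d ->]|a _ [c ->]].
  by exists (fun j => c j + d j); rewrite -big_split; apply: eq_bigr => j _; rewrite scalerDl.
by exists (fun j => a * c j); rewrite scaler_sumr; apply: eq_bigr => j _; rewrite scalerA.
Qed.

Lemma span_widen t m m' n n' x : (m' <= m)%N -> (n <= n')%N -> span t m n x -> span t m' n' x.
Proof.
move=> le_m le_n [c ->].
exists (fun j => if (m <= j < n)%N then c j else 0).
rewrite (big_nat_widenl _ _ _ _ _ le_m) (big_nat_widen _ _ _ _ _ le_n) big_mkcond [RHS]big_mkcond.
by apply: eq_bigr => j _; case: ifP => //= _; rewrite scale0r.
Qed.

Lemma span_eq t t' m n x : (forall j, (j < n)%N -> t j = t' j) -> span t m n x -> span t' m n x.
Proof.
move=> tt' [c ->]; exists c; apply: eq_big_nat => j /andP [_ lt_jn].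
by rewrite tt'.
Qed.

Lemma span_term t j : span t j j.+1 (t j).
Proof. by exists (fun=> 1); rewrite big_nat1 scale1r. Qed.

Lemma spanned_mkseq t n x : span t 0 n x -> spanned (mkseq t n) x.
Proof.
move=> [c ->]; rewrite /spanned size_mkseq; exists (fun i => c i).
by rewrite big_mkord; apply: eq_bigr => i _; rewrite nth_mkseq.
Qed.

Lemma span_indep t : (forall n x, span t 0 n x -> span t n n.+1 x -> x = 0) ->
  forall k n x, span t 0 k x -> span t k n x -> x = 0.
Proof.
move=> indep k n; elim: n => [|n IHn] x x_lo [c x_hi]; first by rewrite x_hi big_geq.
have [lt_nk|le_kn] := ltnP n k; first by rewrite x_hi big_geq.
move: x_hi; rewrite big_nat_recr //=; set y := \sum_(k <= j < n) _ => x_hi.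
have cn0 : c n *: t n = 0.
  apply: (indep n); last by exists c; rewrite big_nat1.
  have -> : c n *: t n = x - y by rewrite x_hi addrAC subrr add0r.
  apply: (submoduleB (submodule_span t 0 n)); first exact: span_widen x_lo.
  by apply: span_widen (leq0n k) (leqnn n) _; exists c.
by apply: IHn x_lo _; exists c; rewrite x_hi cn0 addr0.
Qed.

Section Artinian.
Hypotheses (art : left_artinian R) (fgV : fin_gen V).

Lemma no_free_simple_seq t : ~ (forall n, in_simple (t n) /\ ~ span t 0 n (t n)).
Proof.
move=> t_new.
have indep n x : span t 0 n x -> span t n n.+1 x -> x = 0.
  have [[T [simpleT Tt]] t_out] := t_new n.
  move=> x_lo [c x_eq]; rewrite big_nat1 in x_eq; subst x.
  apply: (simple_meet0 simpleT (submodule_span t 0 n) Tt t_out) => //.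
  by apply: submoduleZ; first by case: simpleT.
pose C k x := exists n, span t k n x.
have [n0 st] : stationary C.
  apply: fin_gen_stationary => // [k|k x [n x_span]]; last by exists n; apply: span_widen x_span.
  split; first by exists k; apply: submodule0 (submodule_span t k k).
  split=> [x y [n x_span] [n' y_span]|a x [n x_span]].
    exists (maxn n n'); apply: (submoduleD (submodule_span t k _)).
      exact: span_widen (leqnn k) (leq_maxl n n') x_span.
    exact: span_widen (leqnn k) (leq_maxr n n') y_span.
  by exists n; apply: submoduleZ (submodule_span t k n) _ _ _.
have [n t_hi] : C n0.+1 (t n0).
  by apply/(st n0.+1 (leqnSn n0)); exists n0.+1; apply: span_term.
have t0 : t n0 = 0.
  by apply: span_indep indep _ _ _ (span_widen (leq0n n0) (leqnn _) (span_term t n0)) t_hi.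
have [_ t_out] := t_new n0; apply: t_out; rewrite t0; exact: submodule0 (submodule_span t 0 n0).
Qed.

Lemma socle_fin_gen :
  exists s : seq V, (forall y, y \in s -> socle y) /\ forall x, socle x -> spanned s x.
Proof.
apply: contrapT => no_fin_gen.
have escape n t : (forall j, (j < n)%N -> in_simple (t j)) ->
    exists y, in_simple y /\ ~ span t 0 n y.
  move=> t_simple; apply: contrapT => all_in; apply: no_fin_gen; exists (mkseq t n); split.
    by move=> y /mapP [j]; rewrite mem_iota => /andP [_ lt_jn] ->; apply/socle_in_simple/t_simple.
  move=> x /(socle_sub (submodule_span t 0 n)) x_span; apply/spanned_mkseq/x_span => y y_simple.
  by apply: contrapT => y_out; apply: all_in; exists y.
have [t t_new] : exists t, forall n, in_simple (t n) /\ ~ span t 0 n (t n).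
  apply: (@nat_dependent_choice _ 0 (fun t n y => in_simple y /\ ~ span t 0 n y))
    => [t t' n y tt' [y_simple y_out]|n t t_simple].
    by split=> // /(span_eq (fun j lt_jn => esym (tt' j lt_jn))).
  by apply: escape => j /t_simple [].
exact: no_free_simple_seq t_new.
Qed.

End Artinian.

End Socle.

Section RadicalSocle.
Variables (R : nzRingType) (alpha beta : forall M : lmodType R, M -> Prop).
(* Otherwise [Set Implicit Arguments] makes the module argument implicit. *)
Arguments alpha : clear implicits.
Arguments beta : clear implicits.
Hypotheses (beta_rad : radical beta) (alpha_pre : preradical alpha)
  (F_alpha_sub_T_beta : forall M : lmodType R, in_F alpha M -> in_T beta M).
Variables (S Q : lmodType R) (i : {linear S -> Q}).
Hypotheses (fgS : fin_gen S) (fgQ : fin_gen Q) (inj_i : injective i)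
  (beta_Q0 : forall y, beta Q y -> y = 0).

Lemma simple_in_alpha T : simple_submodule T -> (forall y, T y -> exists x, i x = y) ->
  forall s, T (i s) -> alpha S s.
Proof.
move=> simpleT T_img s Ts; have [hT [[z [Tz nz0]] T_min]] := simpleT.
have [[_ beta_fun] _] := beta_rad; have [alpha_sub alpha_fun] := alpha_pre.
pose U := Submod (submodule_preimage i hT).
have [sz isz] := T_img z Tz.
have Usz : sz \in submod_pred U by rewrite unfold_in; apply/asboolP; rewrite /= isz.
pose uz : submod_type U := SubmodElem Usz.
have U_cyclic w : cyclic_submod uz w.
  have [r e] := simple_cyclic simpleT Tz nz0 (submod_valP w).
  by exists r; apply: val_inj; apply: inj_i; rewrite e -isz -linearZ.
have fgU : fin_gen (submod_type U) := fin_gen_cyclic U_cyclic.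
pose j := i \o @submod_val R S U : {linear submod_type U -> Q}.
have inj_j : injective j by move=> w w' /inj_i /val_inj.
have [w0 [alpha_w0 nw0]] : exists w : submod_type U, alpha _ w /\ w <> 0.
  apply: contrapT => alphaU0; case: nz0; rewrite -isz; apply: beta_Q0.
  apply: (beta_fun _ _ i fgS fgQ); apply: (beta_fun _ _ (@submod_val R S U) fgU fgS uz).
  apply: (F_alpha_sub_T_beta _).2; split=> // w alpha_w.
  by apply: contrapT => nw; apply: alphaU0; exists w.
have alphaU_T y : (exists w, alpha _ w /\ j w = y) -> T y.
  by move=> [w [_ <-]]; exact: (submod_valP w).
have [alphaU0|T_alphaU] := T_min _ (submodule_image j (alpha_sub _ fgU)) alphaU_T.
  by case: nw0; apply: inj_j; rewrite linear0; apply: alphaU0; exists w0.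
have [w [alpha_w /inj_i <-]] := T_alphaU _ Ts.
exact: (alpha_fun _ _ (@submod_val R S U) fgU fgS).
Qed.

Lemma socle_in_alpha : (forall y, socle y -> exists x, i x = y) ->
  forall x, socle (i x) -> alpha S x.
Proof.
move=> socle_img x socle_ix.
have [x' [alpha_x' /inj_i <-] //] : exists x', alpha S x' /\ i x' = i x.
apply: (socle_sub (submodule_image i (alpha_pre.1 _ fgS))) socle_ix => y [T [simpleT Ty]].
have T_img z : T z -> exists s, i s = z.
  by move=> Tz; apply/socle_img/socle_in_simple; exists T.
have [s is_y] := T_img y Ty.
by exists s; split=> //; apply: (simple_in_alpha simpleT T_img); rewrite is_y.
Qed.

Lemma beta_free_preimage : forall x, beta S x -> x = 0.
Proof.
move=> x beta_x; apply: inj_i; rewrite linear0; apply: beta_Q0.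
by have [[_ beta_fun] _] := beta_rad; apply: beta_fun.
Qed.

End RadicalSocle.

Theorem lemma2p2 (R : nzRingType)
  (alpha beta : forall M : lmodType R, M -> Prop) :
  left_artinian R ->
  radical beta ->
  preradical alpha ->
  (forall M : lmodType R, in_F alpha M -> in_T beta M) ->
  forall (M Q : lmodType R) (p : {linear M -> Q}),
    fin_gen M -> is_quotient_by (beta M) p ->
  forall (S : lmodType R) (i : {linear S -> Q}),
    is_submodule_iso (@socle R Q) i ->
  in_T alpha S /\ in_F beta S.
Proof.
move=> art beta_rad alpha_pre F_alpha_sub_T_beta M Q p fgM pQ S i [inj_i socle_img].
have fgQ : fin_gen Q := fin_gen_image pQ.1 fgM.
have beta_Q0 : forall y, beta Q y -> y = 0 := beta_rad.2 M Q p fgM pQ.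
have fgS : fin_gen S.
  have [s [s_socle socle_spanned]] := socle_fin_gen art fgQ.
  apply: (fin_gen_preimage inj_i) => [y /s_socle /socle_img //|x].
  by apply/socle_spanned/socle_img; exists x.
split; split=> // x.
- apply: (socle_in_alpha beta_rad alpha_pre F_alpha_sub_T_beta fgS fgQ inj_i beta_Q0).
    by move=> y /socle_img.
  by apply/socle_img; exists x.
- exact: (beta_free_preimage beta_rad fgS fgQ inj_i beta_Q0).
Qed.
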